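(* Let $N\ge1$, $h,\varepsilon\in(0,1)$, and let $\Phi:[-1,1]^N\to[-1,1]^N$ be the opinion operator defined in the context. Let $V^0=(v^0_1,\dots,v^0_N)\in[-1,1]^N$ with $v^0_1\le\dots\le v^0_N$, and let $V^n=\Phi^n(V^0)=(v^n_1,\dots,v^n_N)$. Then: (a) for every $n\ge0$, $v^n_1\le\dots\le v^n_N$; (b) if $v^n_k=1$, then $v^n_l=1$ for all $l>k$; (c) if $v^n_k=1$, then $v^m_k=1$ for all $m>n$.
   Context: For $V=(v_1,\dots,v_N)\in[-1,1]^N$ and each $k$, let $J(v_k)=\{l\in\{1,\dots,N\}:|v_l-v_k|\le\varepsilon\}$ and $I(v_k)=|J(v_k)|$. Put $w_k(V)=v_k+\frac{h}{I(v_k)}\sum_{l\in J(v_k)}v_l$. Then $\Phi(V)=(v_1',\dots,v_N')$ where $v_k'=-1$ if $w_k<-1$, $v_k'=1$ if $w_k>1$, and $v_k'=w_k$ if $|w_k|\le1$. *)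

From HB Require Import structures.
From mathcomp Require Import all_boot all_order all_algebra.
Set Implicit Arguments. Unset Strict Implicit. Unset Printing Implicit Defensive.
Import Order.TTheory GRing.Theory Num.Theory.
Local Open Scope ring_scope.

(* An opinion profile V = (v_1,...,v_N) is a function 'I_N -> R
   (index k : 'I_N stands for k+1 in the paper). *)

Definition Jset (R : realFieldType) (N : nat) (eps : R) (V : 'I_N -> R) (k : 'I_N)
  : {set 'I_N} := [set l | `|V l - V k| <= eps].

Definition Icard (R : realFieldType) (N : nat) (eps : R) (V : 'I_N -> R) (k : 'I_N)
  : nat := #|Jset eps V k|.

Definition wk (R : realFieldType) (N : nat) (h eps : R) (V : 'I_N -> R) (k : 'I_N) : R :=
  V k + h / (Icard eps V k)%:R * \sum_(l in Jset eps V k) V l.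

Definition clip (R : realFieldType) (w : R) : R :=
  if w < -1 then -1 else if 1 < w then 1 else w.

Definition Phi (R : realFieldType) (N : nat) (h eps : R) (V : 'I_N -> R) : 'I_N -> R :=
  fun k => clip (wk h eps V k).

(* The update is w_k = v_k + h * m_k, where m_k is the mean of the opinions in
   the eps-neighbourhood J(v_k).  If v_k <= v_l, every opinion in
   J(v_k) \ J(v_l) lies below all of J(v_l) and every opinion in
   J(v_l) \ J(v_k) lies above all of J(v_k), while the pairs taken from the
   intersection cancel; hence m_k <= m_l, so w and its truncation preserve
   the order.  If v_k = 1, then J(v_k) only contains opinions >= 1 - eps >= 0,
   so m_k > 0, w_k > 1 and the truncation returns 1 again. *)

From HB Require Import structures.
From mathcomp Require Import all_boot all_order all_algebra.
From mathcomp Require Import lra.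

Set Implicit Arguments.
Unset Strict Implicit.
Unset Printing Implicit Defensive.
Import Order.TTheory GRing.Theory Num.Theory.
Local Open Scope ring_scope.

Definition nbhd_mean (R : realFieldType) (N : nat) (eps : R) (f : 'I_N -> R)
  (k : 'I_N) : R :=
  (Icard eps f k)%:R^-1 * \sum_(l in Jset eps f k) f l.

Lemma sumr_pairwise_diff_eq0 (R : realFieldType) (N : nat) (P : pred 'I_N)
  (f : 'I_N -> R) :
  \sum_(i | P i) \sum_(j | P j) (f i - f j) = 0.
Proof.
under eq_bigr do rewrite sumrB.
by rewrite sumrB exchange_big /= subrr.
Qed.

Section Neighbourhood.

Variables (R : realFieldType) (N : nat) (eps : R) (f : 'I_N -> R).
Hypothesis eps_ge0 : 0 <= eps.

Lemma Jset_self k : k \in Jset eps f k.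
Proof. by rewrite inE subrr normr0. Qed.

Lemma Icard_gt0 k : (0 < Icard eps f k)%N.
Proof. by apply/card_gt0P; exists k; exact: Jset_self. Qed.

Lemma sum_Jset_diff_le0 k l : f k <= f l ->
  \sum_(i in Jset eps f k) \sum_(j in Jset eps f l) (f i - f j) <= 0.
Proof.
move=> fkl; set S := Jset eps f k; set T := Jset eps f l.
have below_T i j : i \in S -> i \notin T -> j \in T -> f i - f j <= 0.
  rewrite !inE !ler_norml => /andP[? ?].
  by rewrite negb_and -!ltNge => /orP[?|?] /andP[? ?]; lra.
have above_S i j : i \in S -> j \in T -> j \notin S -> f i - f j <= 0.
  rewrite !inE !ler_norml => /andP[? ?] /andP[? ?].
  by rewrite negb_and -!ltNge => /orP[?|?]; lra.
rewrite (bigID (mem T)) /= -[leRHS]addr0 lerD //; last first.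
  apply: sumr_le0 => i /andP[iS iT]; apply: sumr_le0 => j jT; exact: below_T.
under eq_bigr do rewrite (bigID (mem S)) /=.
rewrite big_split /= -[leRHS]addr0 lerD //; last first.
  apply: sumr_le0 => i /andP[iS _]; apply: sumr_le0 => j /andP[jT jS].
  exact: above_S.
under eq_bigr do under eq_bigl do rewrite andbC.
by rewrite sumr_pairwise_diff_eq0.
Qed.

Lemma nbhd_mean_le k l : f k <= f l -> nbhd_mean eps f k <= nbhd_mean eps f l.
Proof.
move=> /sum_Jset_diff_le0.
under eq_bigr do rewrite sumrB sumr_const.
rewrite sumrB sumr_const sumrMnl subr_le0 => le_cross.
have ck : 0 < (Icard eps f k)%:R :> R by rewrite ltr0n Icard_gt0.
have cl : 0 < (Icard eps f l)%:R :> R by rewrite ltr0n Icard_gt0.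
by rewrite ler_pdivrMl // mulrA mulrAC ler_pdivlMr // mulrC !mulr_natl.
Qed.

Lemma nbhd_mean_gt0 k : eps <= 1 -> f k = 1 -> 0 < nbhd_mean eps f k.
Proof.
move=> eps_le1 fk1; rewrite /nbhd_mean mulr_gt0 ?invr_gt0 ?ltr0n ?Icard_gt0 //.
rewrite (bigD1 k) ?Jset_self //= fk1 ltr_pwDl // sumr_ge0 // => i /andP[].
by rewrite inE fk1 ler_norml => /andP[? ?] _; lra.
Qed.

End Neighbourhood.

Lemma wkE (R : realFieldType) (N : nat) (h eps : R) (f : 'I_N -> R) k :
  wk h eps f k = f k + h * nbhd_mean eps f k.
Proof. by rewrite /wk /nbhd_mean mulrA. Qed.

Lemma clip_le (R : realFieldType) (a b : R) : a <= b -> clip a <= clip b.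
Proof.
rewrite /clip => ab.
by case: (ltP a (-1)); case: (ltP b (-1)); case: (ltP 1 a); case: (ltP 1 b);
  lra.
Qed.

Lemma clip_bound (R : realFieldType) (a : R) : -1 <= clip a <= 1.
Proof. by rewrite /clip; case: (ltP a (-1)); case: (ltP 1 a) => *; lra. Qed.

Lemma clip_gt1 (R : realFieldType) (a : R) : 1 < a -> clip a = 1.
Proof. by rewrite /clip => a_gt1; case: ltP => [?|_]; [lra | rewrite a_gt1]. Qed.

Section Phi.

Variables (R : realFieldType) (N : nat) (h eps : R).
Hypotheses (h_gt0 : 0 < h) (eps_ge0 : 0 <= eps).

Lemma Phi_le (f : 'I_N -> R) k l : f k <= f l -> Phi h eps f k <= Phi h eps f l.
Proof.
move=> fkl; rewrite /Phi !wkE clip_le // lerD // ler_pM2l //.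
exact: nbhd_mean_le.
Qed.

Lemma Phi_eq1 (f : 'I_N -> R) k : eps <= 1 -> f k = 1 -> Phi h eps f k = 1.
Proof.
move=> eps_le1 fk1; rewrite /Phi wkE clip_gt1 // fk1 ltrDl mulr_gt0 //.
exact: nbhd_mean_gt0.
Qed.

Lemma iter_Phi_sorted (f : 'I_N -> R) n :
  (forall k l : 'I_N, (k <= l)%N -> f k <= f l) ->
  forall k l : 'I_N, (k <= l)%N -> iter n (Phi h eps) f k <= iter n (Phi h eps) f l.
Proof.
move=> f_sorted; elim: n => [|n IH] k l kl /=; first exact: f_sorted.
by apply: Phi_le; apply: IH.
Qed.

Lemma iter_Phi_eq1 (f : 'I_N -> R) k n :
  eps <= 1 -> f k = 1 -> iter n (Phi h eps) f k = 1.
Proof. by move=> eps_le1 fk1; elim: n => //= n IH; apply: Phi_eq1. Qed.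

End Phi.

Lemma sorted_le1_eq1 (R : realFieldType) (N : nat) (f : 'I_N -> R) k l :
  (forall k l : 'I_N, (k <= l)%N -> f k <= f l) -> f l <= 1 ->
  f k = 1 -> (k <= l)%N -> f l = 1.
Proof.
move=> f_sorted fl_le1 fk1 kl; apply/eqP; rewrite eq_le fl_le1 -fk1.
exact: f_sorted.
Qed.

Theorem corollary1 (R : realFieldType) (N : nat) (h eps : R)
  (hN : (1 <= N)%N)
  (h0 : 0 < h) (h1 : h < 1) (e0 : 0 < eps) (e1 : eps < 1)
  (V0 : 'I_N -> R)
  (HV0 : forall k : 'I_N, -1 <= V0 k <= 1)
  (Hsorted : forall k l : 'I_N, (k <= l)%N -> V0 k <= V0 l) :
  let V := fun n : nat => iter n (Phi h eps) V0 in
  (forall (n : nat) (k l : 'I_N), (k <= l)%N -> V n k <= V n l) /\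
  (forall (n : nat) (k l : 'I_N), V n k = 1 -> (k < l)%N -> V n l = 1) /\
  (forall (n m : nat) (k : 'I_N), V n k = 1 -> (n < m)%N -> V m k = 1).
Proof.
move=> V; have [eps_ge0 eps_le1] := (ltW e0, ltW e1).
have V_sorted n : forall k l : 'I_N, (k <= l)%N -> V n k <= V n l.
  exact: iter_Phi_sorted.
have V_le1 n k : V n k <= 1.
  case: n => [|n]; first by case/andP: (HV0 k).
  by case/andP: (clip_bound (wk h eps (V n) k)).
split=> //; split=> [n k l Vk1 kl | n m k Vk1 nm].
  exact: sorted_le1_eq1 (V_sorted n) (V_le1 n l) Vk1 (ltnW kl).
by rewrite /V -(subnK (ltnW nm)) iterD iter_Phi_eq1.
Qed.
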